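(* Let $N\ge 2$, let $\rho_1,\dots,\rho_N$ be two-qubit density operators, $\rho_k$ acting on qubits $((k-1)_2,k_1)$, and let $\rho_{\mathrm{in}}=\bigotimes_{k=1}^N\rho_k$. Let $\mathcal P$ be any swap-and-correct protocol for the chain, with induced non-postselected swapping channel $\Lambda_{\mathcal P}$, and let $\mathcal B_{[N]}(\rho_{\mathrm{in}})=\bigotimes_{k=1}^N\mathcal B(\rho_k)$ (each $\mathcal B$ acting on the two qubits of $\rho_k$). Then $$\mathcal B\big(\Lambda_{\mathcal P}(\rho_{\mathrm{in}})\big)=\Lambda_{\mathcal P}\big(\mathcal B_{[N]}(\rho_{\mathrm{in}})\big)=\Lambda_{\mathrm{seq}}\big(\mathcal B_{[N]}(\rho_{\mathrm{in}})\big),$$ where $\mathcal B$ on the left acts on the output qubits $(0_2,N_1)$ and $\mathrm{seq}$ is the sequential swapping protocol. In particular this quantity does not depend on $\mathcal P$.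
   Context: Bell states: $|\Psi_{mn}\rangle=(I_2\otimes X^mZ^n)\tfrac{1}{\sqrt2}(|00\rangle+|11\rangle)$, $m,n\in\{0,1\}$, with $X,Y,Z$ the Pauli matrices. Bell-diagonal twirl of a two-qubit state: $\mathcal B(\rho)=\tfrac14\sum_{P\in\{I,X,Y,Z\}}(P\otimes P)\rho(P\otimes P)^\dagger$; it equals $\sum_{m,n}\langle\Psi_{mn}|\rho|\Psi_{mn}\rangle\,|\Psi_{mn}\rangle\langle\Psi_{mn}|$. Let $A=\{I,X,Z,XZ\}$. Repeater chain: nodes $0,1,\dots,N$; end node $0$ holds qubit $0_2$, end node $N$ holds qubit $N_1$, each repeater node $k\in\{1,\dots,N-1\}$ holds qubits $k_1,k_2$. A syndrome is $\vec s=(s_1,\dots,s_{N-1})\in A^{N-1}$, where $s_k=X^mZ^n$ records that the Bell-state measurement (BSM) at node $k$ on $(k_1,k_2)$ projected onto $|\Psi_{mn}\rangle_{k_1k_2}$; write $|\Psi_{s_k}\rangle$ for this state. A swap-and-correct protocol is a map $\mathcal P:A^{N-1}\to A^{N+1}$, $\vec s\mapsto(\mathcal P_0(\vec s),\dots,\mathcal P_N(\vec s))$, with $\mathcal P_k(\vec s)$ the Pauli correction applied at node $k$ (for repeater nodes, to qubit $k_1$, before its BSM), such that (A) there is a permutation $\alpha$ of $\{1,\dots,N-1\}$ (the order of the BSMs) such that for each $k$, $\mathcal P_{\alpha(k)}(\vec s)$ depends only on $s_{\alpha(1)},\dots,s_{\alpha(k-1)}$; and (B) for every syndrome $\vec s$,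 the normalised output obtained from $|\Psi_{00}\rangle\langle\Psi_{00}|^{\otimes N}$ is $|\Psi_{00}\rangle\langle\Psi_{00}|$ on $(0_2,N_1)$. For a syndrome $\vec s$ define $\Lambda_{\mathcal P,\vec s}(\rho)=\mathrm{Tr}_{\text{repeater qubits}}\big[\big(\bigotimes_{k=1}^{N-1}|\Psi_{s_k}\rangle\langle\Psi_{s_k}|_{k_1k_2}\big)C_{\vec s}\rho C_{\vec s}^\dagger\big]$, where $C_{\vec s}$ applies $\mathcal P_0(\vec s)$ to $0_2$, $\mathcal P_N(\vec s)$ to $N_1$ and $\mathcal P_k(\vec s)$ to $k_1$ for $1\le k\le N-1$; the non-postselected swapping channel is $\Lambda_{\mathcal P}=\sum_{\vec s\in A^{N-1}}\Lambda_{\mathcal P,\vec s}$, with output on qubits $(0_2,N_1)$. The sequential protocol $\mathrm{seq}$ has $\mathcal P_0(\vec s)=\mathcal P_1(\vec s)=I$ and $\mathcal P_k(\vec s)=s_{k-1}$ for $k=2,\dots,N$. *)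

(* Quantum states are represented concretely: an operator on
   a finite-dimensional system with computational basis T (a finType) is a
   function  T -> T -> algC  (its matrix entries), a vector is T -> algC. *)
From HB Require Import structures.
From mathcomp Require Import all_boot all_order all_algebra all_fingroup all_field.
Set Implicit Arguments. Unset Strict Implicit. Unset Printing Implicit Defensive.
Import Order.TTheory GRing.Theory Num.Theory.
Local Open Scope ring_scope.

Definition op (T : finType) := T -> T -> algC.
Definition vec (T : finType) := T -> algC.

Definition mulop {T : finType} (A B : op T) : op T :=
  fun x y => \sum_(z : T) A x z * B z y.
Definition adjop {T : finType} (A : op T) : op T := fun x y => (A y x)^*.
Definition trop {T : finType} (A : op T) : algC := \sum_(x : T) A x x.
Definition applyop {T : finType} (A : op T) (v : vec T) : vec T :=
  fun x => \sum_(y : T) A x y * v y.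
Definition proj {T : finType} (v : vec T) : op T := fun x y => v x * (v y)^*.

Definition density {T : finType} (rho : op T) : Prop :=
  [/\ forall x y, rho y x = (rho x y)^*,
      forall v : vec T, 0 <= \sum_(x : T) \sum_(y : T) (v x)^* * rho x y * v y
    & trop rho = 1].

(* single-qubit basis: bool (false = |0>, true = |1>) *)
Definition pI : op bool := fun a b => (a == b)%:R.
Definition pX : op bool := fun a b => (a != b)%:R.
Definition pY : op bool :=
  fun a b => if a == b then 0 else if a then 'i else - 'i.
Definition pZ : op bool := fun a b => (a == b)%:R * (if a then -1 else 1).

(* two-qubit basis: (first qubit, second qubit) *)
Definition B2 : finType := (bool * bool)%type.
Definition tens2 (P Q : op bool) : op B2 := fun x y => P x.1 y.1 * Q x.2 y.2.

(* the set A = {I, X, Z, XZ}: the pair (m, n) stands for X^m Z^n *)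
Definition A := (bool * bool)%type.
Definition paulA (s : A) : op bool :=
  mulop (if s.1 then pX else pI) (if s.2 then pZ else pI).

Definition phiplus : vec B2 := fun x => (x.1 == x.2)%:R / sqrtC 2.
Definition bell (s : A) : vec B2 := applyop (tens2 pI (paulA s)) phiplus.

Definition twirl (rho : op B2) : op B2 :=
  fun x y => 4%:R^-1 * \sum_(P <- [:: pI; pX; pY; pZ])
     mulop (mulop (tens2 P P) rho) (adjop (tens2 P P)) x y.

(* ---------- the repeater chain ----------
   N = n.+1 elementary links, nodes 0..N  ('I_n.+2), repeater nodes 1..N-1
   (repeater i : 'I_n is node i+1).  Link j : 'I_n.+1 (0-indexed) carries the
   qubits (j_2, (j+1)_1); a basis state of the whole chain assigns to every
   link the basis state of its two qubits. *)
Definition chain (n : nat) : finType := {ffun 'I_n.+1 -> B2}.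

Definition prodop (n : nat) (F : 'I_n.+1 -> op B2) : op (chain n) :=
  fun x y => \prod_(j : 'I_n.+1) F j (x j) (y j).

(* repeater i (node i+1): qubit (i+1)_1 is the 2nd qubit of link i,
   qubit (i+1)_2 is the 1st qubit of link i+1 *)
Definition link_left (n : nat) (i : 'I_n) : 'I_n.+1 := widen_ord (leqnSn n) i.
Definition link_right (n : nat) (i : 'I_n) : 'I_n.+1 := lift ord0 i.
Definition node_of_rep (n : nat) (i : 'I_n) : 'I_n.+2 := lift ord0 (link_left i).

Definition repq (n : nat) (x : chain n) (i : 'I_n) : B2 :=
  ((x (link_left i)).2, (x (link_right i)).1).
Definition reps (n : nat) (x : chain n) : {ffun 'I_n -> B2} := [ffun i => repq x i].
Definition outq (n : nat) (x : chain n) : B2 := ((x ord0).1, (x ord_max).2).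

Definition ptr_rep (n : nat) (M : op (chain n)) : op B2 :=
  fun a b => \sum_(x : chain n) \sum_(y : chain n)
     ((outq x == a) && (outq y == b) && (reps x == reps y))%:R * M x y.

(* syndromes and swap-and-correct protocols (as maps A^(N-1) -> A^(N+1)) *)
Definition synd (n : nat) : finType := {ffun 'I_n -> A}.
Definition protocol (n : nat) := synd n -> 'I_n.+2 -> A.

(* the correction C_s: P_0 on 0_2, P_k on k_1 for k = 1..N (k_1 = 2nd qubit of
   link k-1, N_1 for k = N); identity on the qubits k_2, k >= 1 *)
Definition corr (n : nat) (P : protocol n) (s : synd n) : op (chain n) :=
  prodop (fun j : 'I_n.+1 =>
    tens2 (if j == ord0 then paulA (P s ord0) else pI) (paulA (P s (lift ord0 j)))).

Definition bsm_proj (n : nat) (s : synd n) : op (chain n) :=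
  fun x y => (outq x == outq y)%:R *
     \prod_(i : 'I_n) proj (bell (s i)) (repq x i) (repq y i).

Definition lam_s (n : nat) (P : protocol n) (s : synd n) (rho : op (chain n)) : op B2 :=
  ptr_rep (mulop (bsm_proj s) (mulop (mulop (corr P s) rho) (adjop (corr P s)))).
Definition lam (n : nat) (P : protocol n) (rho : op (chain n)) : op B2 :=
  fun a b => \sum_(s : synd n) lam_s P s rho a b.

Definition swap_and_correct (n : nat) (P : protocol n) : Prop :=
  (exists alpha : {perm 'I_n}, forall (k : 'I_n) (s s' : synd n),
      (forall j : 'I_n, (j < k)%N -> s (alpha j) = s' (alpha j)) ->
      P s (node_of_rep (alpha k)) = P s' (node_of_rep (alpha k))) /\
  (forall s : synd n,
      let M := lam_s P s (prodop (fun _ => proj (bell (false, false)))) in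
      trop M != 0 /\ M = (fun a b => trop M * proj (bell (false, false)) a b)).

(* the sequential protocol: P_0 = P_1 = I, P_k(s) = s_{k-1} for k = 2..N
   (node k-1 is repeater k-2) *)
Definition seqP (n : nat) : protocol n :=
  fun s k => if (1 < k)%N then
               (if (insub (k.-2 : nat) : option 'I_n) is Some i then s i else (false, false))
             else (false, false).

From HB Require Import structures.
From mathcomp Require Import all_boot all_order all_algebra all_fingroup all_field.
From mathcomp Require Import ring.
From Stdlib Require Import FunctionalExtensionality.
Set Implicit Arguments. Unset Strict Implicit. Unset Printing Implicit Defensive.
Import Order.TTheory GRing.Theory Num.Theory.
Local Open Scope ring_scope.

(* Expand every link state in the two-qubit Pauli basis E(t,u) = P_t (x) P_u.  Conjugating by a
   Pauli only produces a sign, and the Bell projections on the repeaters kill every chain of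
   E-terms whose Paulis on the two qubits of some repeater differ; so Lambda_{P,s} maps a "linked"
   chain of E-terms to a signed E-term on the end qubits, and the twirl keeps exactly the
   diagonal terms E(t,t).  Condition (B) forces the sign of each constant chain E(g,g)^(x)N to
   be +1.  Hence, after summing over syndromes, an all-diagonal chain contributes |A|^(N-1) if it
   is constant and 0 otherwise, whatever the protocol.  In the twirled output only the two end
   Paulis must agree; for a non-constant linked chain, flipping the syndrome of the last measured
   repeater at which the chain deviates reverses the sign while, by (A), leaving every relevant
   correction unchanged, so the syndrome sum again vanishes. *)

(** * Finite sums and operators *)

Lemma sum_pair (I J : finType) (F : I * J -> algC) :
  \sum_(p : I * J) F p = \sum_(i : I) \sum_(j : J) F (i, j).
Proof. by rewrite pair_bigA; apply: eq_bigr => -[]. Qed.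

Lemma sum_A (F : A -> algC) :
  \sum_(t : A) F t = F (true, true) + F (true, false) + (F (false, true) + F (false, false)).
Proof. by rewrite sum_pair !big_bool. Qed.

Lemma sum_B2 (F : B2 -> algC) : \sum_(x : B2) F x = \sum_a \sum_b F (a, b).
Proof. exact: sum_pair. Qed.

Lemma sum_B2_tens (F G : bool -> bool -> algC) :
  \sum_(x : B2) \sum_(y : B2) F x.1 y.1 * G x.2 y.2 =
  (\sum_a \sum_b F a b) * (\sum_a \sum_b G a b).
Proof.
rewrite sum_B2; under eq_bigr do under eq_bigr do rewrite sum_B2.
by rewrite !big_bool /=; ring.
Qed.

Lemma sum_indicator (T : finType) (a : T) (F : T -> algC) : \sum_i (i == a)%:R * F i = F a.
Proof. by rewrite (bigD1 a) //= eqxx mul1r big1 ?addr0 // => i /negbTE ->; rewrite mul0r. Qed.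

Lemma prod_indicator (I : finType) (b : I -> bool) :
  \prod_i ((b i)%:R : algC) = ([forall i, b i])%:R.
Proof.
have [/forallP allb|/forallPn [i /negbTE bi]] := boolP [forall i, b i].
  by rewrite big1 // => i _; rewrite allb.
by rewrite (bigD1 i) //= bi mul0r.
Qed.

Lemma sum_sign_reversing_eq0 (T : finType) (F : T -> algC) (tau : T -> T) :
  involutive tau -> (forall x, F (tau x) = - F x) -> \sum_x F x = 0.
Proof.
move=> tauK Ftau; have SN : \sum_x F x = - \sum_x F x.
  by rewrite {1}(reindex_inj (inv_inj tauK)) -sumrN; apply: eq_bigr => x _; apply: Ftau.
by apply/eqP; move/eqP: SN; rewrite -addr_eq0 -mulr2n mulrn_eq0.
Qed.

Lemma op_ext (T : finType) (M N : op T) : (forall x y, M x y = N x y) -> M = N.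
Proof.
by move=> h; apply: functional_extensionality => x; apply: functional_extensionality.
Qed.

Definition conjop {T : finType} (Q M : op T) : op T := mulop (mulop Q M) (adjop Q).
Definition opsum {T I : finType} (w : I -> algC) (M : I -> op T) : op T :=
  fun x y => \sum_i w i * M i x y.

Lemma eq_opsum (T I : finType) (w w' : I -> algC) (M : I -> op T) :
  (forall i, w i = w' i) -> opsum w M = opsum w' M.
Proof. by move=> e; apply: op_ext => x y; apply: eq_bigr => i _; rewrite e. Qed.

Lemma mulop_opsum (T I : finType) (N : op T) (w : I -> algC) (M : I -> op T) :
  mulop N (opsum w M) = opsum w (fun i => mulop N (M i)).
Proof.
apply: op_ext => x y; rewrite /mulop /opsum.
under eq_bigr do rewrite big_distrr.
rewrite exchange_big; apply: eq_bigr => i _ /=.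
by rewrite big_distrr; apply: eq_bigr => z _ /=; ring.
Qed.

Lemma opsum_mulop (T I : finType) (N : op T) (w : I -> algC) (M : I -> op T) :
  mulop (opsum w M) N = opsum w (fun i => mulop (M i) N).
Proof.
apply: op_ext => x y; rewrite /mulop /opsum.
under eq_bigr do rewrite big_distrl.
rewrite exchange_big; apply: eq_bigr => i _ /=.
by rewrite big_distrr; apply: eq_bigr => z _ /=; ring.
Qed.

Lemma conjop_opsum (T I : finType) (Q : op T) (w : I -> algC) (M : I -> op T) :
  conjop Q (opsum w M) = opsum w (fun i => conjop Q (M i)).
Proof. by rewrite /conjop mulop_opsum opsum_mulop. Qed.

Lemma conjop_scale (T : finType) (c : algC) (Q M : op T) :
  conjop (fun x y => c * Q x y) M = fun x y => c * c^* * conjop Q M x y.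
Proof.
apply: op_ext => x y; rewrite /conjop /mulop /adjop big_distrr; apply: eq_bigr => z _ /=.
rewrite !big_distrl big_distrr; apply: eq_bigr => w _ /=.
by rewrite rmorphM; ring.
Qed.

Lemma mulop_tens2 P Q R S : mulop (tens2 P Q) (tens2 R S) = tens2 (mulop P R) (mulop Q S).
Proof.
apply: op_ext => x y; rewrite /mulop /tens2 big_distrlr /= sum_pair.
by apply: eq_bigr => a _; apply: eq_bigr => b _; ring.
Qed.

Lemma adjop_tens2 P Q : adjop (tens2 P Q) = tens2 (adjop P) (adjop Q).
Proof. by apply: op_ext => x y; rewrite /adjop /tens2 rmorphM. Qed.

Lemma conjop_tens2 P Q R S : conjop (tens2 P Q) (tens2 R S) = tens2 (conjop P R) (conjop Q S).
Proof. by rewrite /conjop !mulop_tens2 adjop_tens2 mulop_tens2. Qed.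

Lemma mulop_prodop n (F G : 'I_n.+1 -> op B2) :
  mulop (prodop F) (prodop G) = prodop (fun j => mulop (F j) (G j)).
Proof.
apply: op_ext => x y; rewrite /mulop /prodop bigA_distr_bigA.
by apply: eq_bigr => z _; rewrite big_split.
Qed.

Lemma adjop_prodop n (F : 'I_n.+1 -> op B2) : adjop (prodop F) = prodop (fun j => adjop (F j)).
Proof. by apply: op_ext => x y; rewrite /adjop /prodop rmorph_prod. Qed.

Lemma conjop_prodop n (F G : 'I_n.+1 -> op B2) :
  conjop (prodop F) (prodop G) = prodop (fun j => conjop (F j) (G j)).
Proof. by rewrite /conjop !mulop_prodop adjop_prodop mulop_prodop. Qed.

Lemma eq_prodop n (F G : 'I_n.+1 -> op B2) : (forall j, F j = G j) -> prodop F = prodop G.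
Proof. by move=> eFG; apply: op_ext => x y; apply: eq_bigr => j _; rewrite eFG. Qed.

Lemma prodop_opsum n (I : finType) (w : 'I_n.+1 -> I -> algC) (M : I -> op B2) :
  prodop (fun j => opsum (w j) M) =
  opsum (fun f : {ffun 'I_n.+1 -> I} => \prod_j w j (f j)) (fun f => prodop (fun j => M (f j))).
Proof.
apply: op_ext => x y; rewrite /prodop /opsum bigA_distr_bigA.
by apply: eq_bigr => f _; rewrite big_split.
Qed.

(** * Pauli operators and their commutation signs *)

Definition symp (p t : A) : bool := (p.1 && t.2) (+) (p.2 && t.1).
Definition psign (p t : A) : algC := (-1) ^+ symp p t.
Definition xorA (p q : A) : A := (p.1 (+) q.1, p.2 (+) q.2).

Lemma psign_xorl p q t : psign (xorA p q) t = psign p t * psign q t.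
Proof. by rewrite /psign -signr_addb; case: p q t => [[] []] [[] []] [[] []]. Qed.

Lemma psign_xorr p t u : psign p (xorA t u) = psign p t * psign p u.
Proof. by rewrite /psign -signr_addb; case: p t u => [[] []] [[] []] [[] []]. Qed.

Lemma psign0l t : psign (false, false) t = 1.
Proof. by []. Qed.

Lemma psign0r p : psign p (false, false) = 1.
Proof. by case: p => [[] []]. Qed.

Lemma psignK p t : psign p t * psign p t = 1.
Proof. by rewrite /psign -signr_addb addbb. Qed.

Lemma sum_psign t u : \sum_p psign p t * psign p u = 4%:R * (t == u)%:R.
Proof. by rewrite sum_A; case: t u => [[] []] [[] []]; rewrite /psign /=; ring. Qed.

Lemma exists_symp p : p != (false, false) -> exists w, symp w p.
Proof. by move=> p_neq0; exists (p.2, ~~ p.2); move: p_neq0; case: p => [[] []]. Qed.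

Lemma xorAK p : cancel (xorA p) (xorA p).
Proof. by case: p => [[] []] [[] []]. Qed.

Lemma xorA_eq0 p q : (xorA p q == (false, false)) = (q == p).
Proof. by case: p q => [[] []] [[] []]. Qed.

Lemma paulAE p a b : paulA p a b = (b == a (+) p.1)%:R * (-1) ^+ (p.2 && b).
Proof.
rewrite /paulA /mulop big_bool.
by case: p => [[] []]; case: a; case: b; rewrite /pI /pX /pZ /= ?mulr0n ?mulr1n; ring.
Qed.

Lemma pI_paulA : pI = paulA (false, false).
Proof. by apply: op_ext => -[] []; rewrite paulAE /pI /=; ring. Qed.

Lemma pX_paulA : pX = paulA (true, false).
Proof. by apply: op_ext => -[] []; rewrite paulAE /pX /=; ring. Qed.

Lemma pZ_paulA : pZ = paulA (false, true).
Proof. by apply: op_ext => -[] []; rewrite paulAE /pZ /=; ring. Qed.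

Lemma pY_paulA a b : pY a b = 'i * paulA (true, true) a b.
Proof. by case: a; case: b; rewrite paulAE /pY /= ?mulr0n ?mulr1n; ring. Qed.

Lemma conj_paulA p a b : (paulA p a b)^* = paulA p a b.
Proof. by rewrite paulAE rmorphM rmorph_nat rmorph_sign. Qed.

Lemma conjop_paulA p t : conjop (paulA p) (paulA t) = fun a b => psign p t * paulA t a b.
Proof.
apply: op_ext => a b; rewrite /conjop /mulop /adjop !big_bool /= !conj_paulA !paulAE.
by case: p t => [[] []] [[] []]; case: a; case: b; rewrite /psign /= ?mulr0n ?mulr1n; ring.
Qed.

(** * The two-qubit Pauli basis, the twirl and Bell states *)

Definition pauli2 (tu : A * A) : op B2 := tens2 (paulA tu.1) (paulA tu.2).

Definition coef (M : op B2) (tu : A * A) : algC :=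
  4%:R^-1 * \sum_x \sum_y pauli2 tu x y * M x y.

Lemma conjop_tens2_paulA p q tu :
  conjop (tens2 (paulA p) (paulA q)) (pauli2 tu) =
  fun x y => psign p tu.1 * psign q tu.2 * pauli2 tu x y.
Proof.
by rewrite conjop_tens2 !conjop_paulA; apply: op_ext => x y; rewrite /pauli2 /tens2; ring.
Qed.

Lemma sum_paulA_complete a b a' b' :
  \sum_t paulA t a b * paulA t a' b' = 2%:R * ((a == a') && (b == b'))%:R.
Proof.
by rewrite sum_A !paulAE; case: a b a' b' => [] [] [] []; rewrite /= ?mulr0n ?mulr1n; ring.
Qed.

Lemma sum_paulA_orthogonal t t' :
  \sum_a \sum_b paulA t a b * paulA t' a b = 2%:R * (t == t')%:R.
Proof.
rewrite !big_bool !paulAE.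
by case: t t' => [[] []] [[] []]; rewrite /= ?mulr0n ?mulr1n; ring.
Qed.

Lemma pauli2_complete x y x' y' :
  4%:R^-1 * \sum_tu pauli2 tu x y * pauli2 tu x' y' = ((x == x') && (y == y'))%:R.
Proof.
have -> : \sum_tu pauli2 tu x y * pauli2 tu x' y' =
    (\sum_t paulA t x.1 y.1 * paulA t x'.1 y'.1) * \sum_u paulA u x.2 y.2 * paulA u x'.2 y'.2.
  rewrite big_distrl sum_pair; apply: eq_bigr => t _; rewrite big_distrr.
  by apply: eq_bigr => u _; rewrite /pauli2 /tens2 mulrACA.
have -> : (x == x') && (y == y') =
    ((x.1 == x'.1) && (y.1 == y'.1)) && ((x.2 == x'.2) && (y.2 == y'.2)).
  by case: x x' y y' => [? ?] [? ?] [? ?] [? ?]; rewrite !xpair_eqE andbACA.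
by rewrite !sum_paulA_complete -!mulnb !natrM; field.
Qed.

Lemma pauli2_orthogonal tu tu' :
  \sum_x \sum_y pauli2 tu x y * pauli2 tu' x y = 4%:R * (tu == tu')%:R.
Proof.
have -> : \sum_x \sum_y pauli2 tu x y * pauli2 tu' x y = \sum_(x : B2) \sum_(y : B2)
    (paulA tu.1 x.1 y.1 * paulA tu'.1 x.1 y.1) * (paulA tu.2 x.2 y.2 * paulA tu'.2 x.2 y.2).
  by do 2!apply: eq_bigr => ? _; rewrite /pauli2 /tens2 mulrACA.
rewrite (sum_B2_tens (fun a b => paulA tu.1 a b * paulA tu'.1 a b)
                    (fun a b => paulA tu.2 a b * paulA tu'.2 a b)).
rewrite !sum_paulA_orthogonal.
by case: tu tu' => [t u] [t' u']; rewrite xpair_eqE -mulnb natrM; ring.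
Qed.

Lemma pauli2_expansion (M : op B2) : M = opsum (coef M) pauli2.
Proof.
apply: op_ext => x y; rewrite /opsum /coef.
transitivity (\sum_x' \sum_y' M x' y' * ((x' == x) && (y' == y))%:R).
  transitivity (\sum_x' (x' == x)%:R * \sum_y' (y' == y)%:R * M x' y').
    by rewrite !sum_indicator.
  apply: eq_bigr => x' _; rewrite big_distrr; apply: eq_bigr => y' _ /=.
  by rewrite -mulnb natrM mulrA mulrC.
transitivity (\sum_tu \sum_x' \sum_y' 4%:R^-1 * (pauli2 tu x' y' * M x' y') * pauli2 tu x y).
  rewrite [RHS]exchange_big; apply: eq_bigr => x' _.
  rewrite [RHS]exchange_big; apply: eq_bigr => y' _ /=.
  by rewrite -pauli2_complete mulrCA big_distrr big_distrr; apply: eq_bigr => tu _ /=; ring.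
apply: eq_bigr => tu _; rewrite -mulrA big_distrl big_distrr; apply: eq_bigr => x' _ /=.
by rewrite big_distrl big_distrr; apply: eq_bigr => y' _ /=; ring.
Qed.

Lemma coef_pauli2 tu tu' : coef (pauli2 tu') tu = (tu == tu')%:R.
Proof. by rewrite /coef pauli2_orthogonal mulKf // pnatr_eq0. Qed.

Lemma coef_scale c M tu : coef (fun x y => c * M x y) tu = c * coef M tu.
Proof.
rewrite /coef [RHS]mulrCA; congr (_ * _); rewrite big_distrr; apply: eq_bigr => x _.
by rewrite big_distrr; apply: eq_bigr => y _ /=; rewrite mulrCA.
Qed.

Lemma coef_opsum (I : finType) (w : I -> algC) (M : I -> op B2) tu :
  coef (opsum w M) tu = \sum_i w i * coef (M i) tu.
Proof.
rewrite /coef /opsum; under [RHS]eq_bigr do rewrite mulrCA.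
rewrite -big_distrr /=; congr (_ * _).
under [RHS]eq_bigr do rewrite big_distrr /=.
rewrite [RHS]exchange_big; apply: eq_bigr => x _.
under [RHS]eq_bigr do rewrite big_distrr /=.
rewrite [RHS]exchange_big; apply: eq_bigr => y _.
by rewrite big_distrr; apply: eq_bigr => i _ /=; rewrite mulrCA.
Qed.

Lemma coef_opsum_pauli2 (I : finType) (w : I -> algC) (e : I -> A * A) tu :
  coef (opsum w (fun i => pauli2 (e i))) tu = \sum_(i | e i == tu) w i.
Proof.
rewrite coef_opsum [RHS]big_mkcond; apply: eq_bigr => i _.
by rewrite coef_pauli2 eq_sym; case: eqP; rewrite ?mulr1 ?mulr0.
Qed.

Lemma twirlE (M : op B2) :
  twirl M = fun x y => 4%:R^-1 * \sum_(p : A) conjop (tens2 (paulA p) (paulA p)) M x y.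
Proof.
have pY2 : tens2 pY pY = fun x y => -1 * tens2 (paulA (true, true)) (paulA (true, true)) x y.
  apply: op_ext => x y; rewrite /tens2 !pY_paulA mulrACA -expr2 sqrCi; ring.
apply: op_ext => x y; rewrite /twirl !big_cons big_nil sum_A -!/(conjop _ _).
rewrite pY2 conjop_scale pI_paulA pX_paulA pZ_paulA rmorphN1; congr (_ * _); ring.
Qed.

Lemma twirl_pauli2 tu : twirl (pauli2 tu) = fun x y => (tu.1 == tu.2)%:R * pauli2 tu x y.
Proof.
apply: op_ext => x y; rewrite twirlE /pauli2.
under eq_bigr do rewrite conjop_tens2 !conjop_paulA /tens2 mulrACA.
by rewrite -big_distrl sum_psign /= mulrA mulKf // pnatr_eq0.
Qed.

Lemma twirl_opsum (I : finType) (w : I -> algC) (M : I -> op B2) :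
  twirl (opsum w M) = opsum w (fun i => twirl (M i)).
Proof.
apply: op_ext => x y; rewrite !twirlE /opsum.
under eq_bigr do rewrite conjop_opsum.
rewrite exchange_big big_distrr; apply: eq_bigr => i _ /=.
by rewrite twirlE -big_distrr mulrCA.
Qed.

Lemma twirl_opsum_pauli2 (I : finType) (w : I -> algC) (e : I -> A * A) :
  twirl (opsum w (fun i => pauli2 (e i))) =
  opsum (fun i => ((e i).1 == (e i).2)%:R * w i) (fun i => pauli2 (e i)).
Proof.
rewrite twirl_opsum; apply: op_ext => x y; apply: eq_bigr => i _.
by rewrite twirl_pauli2 mulrCA mulrA.
Qed.

Lemma bellE s x : bell s x = paulA s x.2 x.1 / sqrtC 2.
Proof.
rewrite /bell /applyop /phiplus /tens2 sum_B2 !big_bool /= pI_paulA !paulAE.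
by case: x s => [[] []] [[] []]; rewrite /= ?mulr0n ?mulr1n; ring.
Qed.

Lemma proj_bellE s x y :
  proj (bell s) x y = 2%:R^-1 * (paulA s x.2 x.1 * paulA s y.2 y.1).
Proof.
have conj_sqrt2 : (sqrtC 2)^* = sqrtC 2 :> algC by apply: geC0_conj; rewrite sqrtC_ge0 ler0n.
rewrite /proj !bellE rmorphM fmorphV /= conj_paulA conj_sqrt2.
by rewrite mulrACA -invfM -expr2 sqrtCK mulrC.
Qed.

Lemma bell00_expansion :
  proj (bell (false, false)) = opsum (fun tu => (tu.1 == tu.2)%:R / 4%:R) pauli2.
Proof.
apply: op_ext => x y; rewrite /opsum sum_pair !sum_A proj_bellE /pauli2 /tens2 !paulAE.
by case: x y => [[] []] [[] []]; rewrite /= ?mulr0n ?mulr1n; field.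
Qed.

Lemma bell_expectation_pauli2 s t u :
  trop (mulop (proj (bell s)) (pauli2 (t, u))) = (t == u)%:R * psign s u.
Proof.
have two_neq0 : 2%:R != 0 :> algC by rewrite pnatr_eq0.
rewrite /trop /mulop; under eq_bigr do under eq_bigr do rewrite proj_bellE -mulrA.
under eq_bigr do rewrite -big_distrr /=.
rewrite -big_distrr /=; apply: (mulfI two_neq0); rewrite mulrA mulfV // mul1r.
rewrite sum_B2; under eq_bigr do under eq_bigr do rewrite sum_B2.
rewrite !big_bool /pauli2 /tens2 !paulAE.
by case: s t u => [[] []] [[] []] [[] []]; rewrite /psign /= ?mulr0n ?mulr1n; ring.
Qed.

(** * Swapping a chain of Pauli operators *)

Definition mk_chain n (o : B2) (r : {ffun 'I_n -> B2}) : chain n :=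
  [ffun j : 'I_n.+1 => (if unlift ord0 j is Some i then (r i).2 else o.1,
                        if unlift ord_max j is Some i then (r i).1 else o.2)].

Lemma link_leftE n (i : 'I_n) : link_left i = lift ord_max i.
Proof. by apply: val_inj; rewrite /= /bump leqNgt ltn_ord. Qed.

Lemma outq_mk_chain n o (r : {ffun 'I_n -> B2}) : outq (mk_chain o r) = o.
Proof. by rewrite /outq !ffunE !unlift_none; case: o. Qed.

Lemma repq_mk_chain n o (r : {ffun 'I_n -> B2}) i : repq (mk_chain o r) i = r i.
Proof. by rewrite /repq !ffunE link_leftE liftK /link_right liftK; case: (r i). Qed.

Lemma reps_mk_chain n o (r : {ffun 'I_n -> B2}) : reps (mk_chain o r) = r.
Proof. by apply/ffunP => i; rewrite ffunE repq_mk_chain. Qed.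

Lemma mk_chainK n (x : chain n) : mk_chain (outq x) (reps x) = x.
Proof.
apply/ffunP => j; rewrite ffunE [RHS]surjective_pairing.
congr (_, _); case: unliftP => [i ->|->]; rewrite ?ffunE //.
by rewrite /repq link_leftE.
Qed.

Lemma mk_chain_eq n (x : chain n) b r :
  (outq x == b) && (r == reps x) = (x == mk_chain b r).
Proof.
apply/andP/eqP => [[/eqP <- /eqP ->]|->]; first by rewrite mk_chainK.
by rewrite outq_mk_chain reps_mk_chain.
Qed.

Lemma sum_chain n (F : chain n -> algC) :
  \sum_(x : chain n) F x = \sum_(o : B2) \sum_(r : {ffun 'I_n -> B2}) F (mk_chain o r).
Proof.
rewrite pair_bigA (reindex (fun p : B2 * {ffun 'I_n -> B2} => mk_chain p.1 p.2)) //=.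
exists (fun x => (outq x, reps x)) => [[o r] _|x _] /=.
  by rewrite outq_mk_chain reps_mk_chain.
by rewrite mk_chainK.
Qed.

Lemma sum_outq n a (F : chain n -> algC) :
  \sum_(x : chain n) (outq x == a)%:R * F x = \sum_r F (mk_chain a r).
Proof.
rewrite sum_chain; under eq_bigr do under eq_bigr do rewrite outq_mk_chain.
by under eq_bigr do rewrite -big_distrr /=; rewrite sum_indicator.
Qed.

Lemma ptr_repE n (M : op (chain n)) a b :
  ptr_rep M a b = \sum_r M (mk_chain a r) (mk_chain b r).
Proof.
transitivity (\sum_x (outq x == a)%:R * M x (mk_chain b (reps x))).
  apply: eq_bigr => x _; rewrite -(sum_indicator (mk_chain b (reps x)) (M x)) big_distrr.
  by apply: eq_bigr => y _; rewrite -andbA mk_chain_eq -mulnb natrM -mulrA.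
by rewrite sum_outq; under eq_bigr do rewrite reps_mk_chain.
Qed.

Lemma ptr_rep_opsum n (I : finType) (w : I -> algC) (M : I -> op (chain n)) :
  ptr_rep (opsum w M) = opsum w (fun i => ptr_rep (M i)).
Proof.
apply: op_ext => a b; rewrite ptr_repE /opsum exchange_big.
by apply: eq_bigr => i _; rewrite ptr_repE big_distrr.
Qed.

Lemma bsm_proj_mk_chain n (s : synd n) a b r r' :
  bsm_proj s (mk_chain a r) (mk_chain b r') =
  (a == b)%:R * \prod_i proj (bell (s i)) (r i) (r' i).
Proof.
rewrite /bsm_proj !outq_mk_chain; congr (_ * _).
by apply: eq_bigr => i _; rewrite !repq_mk_chain.
Qed.

Lemma mulop_bsm_proj_mk_chain n (s : synd n) (N : op (chain n)) a r y :
  mulop (bsm_proj s) N (mk_chain a r) y =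
  \sum_(r' : {ffun 'I_n -> B2}) (\prod_i proj (bell (s i)) (r i) (r' i)) * N (mk_chain a r') y.
Proof.
rewrite /mulop sum_chain.
under eq_bigr do under eq_bigr do rewrite bsm_proj_mk_chain eq_sym -mulrA.
by under eq_bigr do rewrite -big_distrr /=; rewrite sum_indicator.
Qed.

Definition ends n (f : {ffun 'I_n.+1 -> A * A}) : A * A := ((f ord0).1, (f ord_max).2).
Definition linked n (f : {ffun 'I_n.+1 -> A * A}) : bool :=
  [forall i : 'I_n, (f (link_left i)).2 == (f (link_right i)).1].

Lemma prodop_pauli2_mk_chain n (f : {ffun 'I_n.+1 -> A * A}) a b r r' :
  prodop (fun j => pauli2 (f j)) (mk_chain a r) (mk_chain b r') =
  pauli2 (ends f) a b * \prod_i pauli2 ((f (link_left i)).2, (f (link_right i)).1) (r i) (r' i).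
Proof.
have split x y : prodop (fun j => pauli2 (f j)) x y = pauli2 (ends f) (outq x) (outq y) *
    \prod_i pauli2 ((f (link_left i)).2, (f (link_right i)).1) (repq x i) (repq y i).
  rewrite /prodop /pauli2 /tens2 big_split /= big_ord_recl big_ord_recr /= big_split /=.
  by rewrite /repq /link_left /link_right /=; ring.
by rewrite split !outq_mk_chain; under eq_bigr do rewrite !repq_mk_chain.
Qed.

Lemma ptr_rep_bsm_pauli2 n (s : synd n) (f : {ffun 'I_n.+1 -> A * A}) a b :
  ptr_rep (mulop (bsm_proj s) (prodop (fun j => pauli2 (f j)))) a b =
  (linked f)%:R * \prod_i psign (s i) (f (link_right i)).1 * pauli2 (ends f) a b.
Proof.
pose g i := ((f (link_left i)).2, (f (link_right i)).1).
transitivity (pauli2 (ends f) a b * \sum_(r : {ffun 'I_n -> B2}) \sum_(r' : {ffun 'I_n -> B2})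
    \prod_i (proj (bell (s i)) (r i) (r' i) * pauli2 (g i) (r' i) (r i))).
  rewrite ptr_repE big_distrr; apply: eq_bigr => r _.
  rewrite mulop_bsm_proj_mk_chain big_distrr; apply: eq_bigr => r' _.
  by rewrite prodop_pauli2_mk_chain /= [in RHS]big_split mulrCA.
transitivity (pauli2 (ends f) a b * \prod_i trop (mulop (proj (bell (s i))) (pauli2 (g i)))).
  rewrite /trop /mulop bigA_distr_bigA; congr (_ * _).
  by apply: eq_bigr => r _; rewrite bigA_distr_bigA.
under eq_bigr do rewrite bell_expectation_pauli2.
by rewrite big_split /= prod_indicator mulrC.
Qed.

(* Lambda_{Q,s} maps the Pauli chain (x)_j E(f j) to [transfer Q s f] E(ends f), see
   [lam_s_pauli2_expansion]. *)
Definition transfer n (Q : protocol n) (s : synd n) (f : {ffun 'I_n.+1 -> A * A}) : algC :=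
  (linked f)%:R * \prod_i psign (s i) (f (link_right i)).1 *
  (psign (Q s ord0) (f ord0).1 * \prod_j psign (Q s (lift ord0 j)) (f j).2).

Lemma lam_s_pauli2_expansion n (Q : protocol n) s (c : 'I_n.+1 -> A * A -> algC) :
  lam_s Q s (prodop (fun j => opsum (c j) pauli2)) =
  opsum (fun f : {ffun 'I_n.+1 -> A * A} => (\prod_j c j (f j)) * transfer Q s f)
        (fun f => pauli2 (ends f)).
Proof.
pose q0 (j : 'I_n.+1) := if j == ord0 then Q s ord0 else (false, false).
have corr_link j :
    conjop (tens2 (if j == ord0 then paulA (Q s ord0) else pI) (paulA (Q s (lift ord0 j))))
      (opsum (c j) pauli2) =
    opsum (fun tu => c j tu * (psign (q0 j) tu.1 * psign (Q s (lift ord0 j)) tu.2)) pauli2.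
  rewrite (_ : (if _ then _ else _) = paulA (q0 j)); last by rewrite /q0 pI_paulA; case: ifP.
  rewrite conjop_opsum; apply: op_ext => x y; apply: eq_bigr => tu _.
  by rewrite conjop_tens2_paulA mulrA.
rewrite /lam_s -/(conjop _ _) /corr conjop_prodop (eq_prodop corr_link).
rewrite prodop_opsum mulop_opsum ptr_rep_opsum; apply: op_ext => a b.
apply: eq_bigr => f _.
have q0_signs : \prod_j psign (q0 j) (f j).1 = psign (Q s ord0) (f ord0).1.
  by rewrite big_ord_recl /q0 eqxx big1 ?mulr1.
by rewrite ptr_rep_bsm_pauli2 !big_split /= q0_signs /transfer; ring.
Qed.

Lemma lam_pauli2_expansion n (Q : protocol n) (c : 'I_n.+1 -> A * A -> algC) :
  lam Q (prodop (fun j => opsum (c j) pauli2)) =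
  opsum (fun f : {ffun 'I_n.+1 -> A * A} => (\prod_j c j (f j)) * \sum_s transfer Q s f)
        (fun f => pauli2 (ends f)).
Proof.
apply: op_ext => a b; rewrite /lam; under eq_bigr do rewrite lam_s_pauli2_expansion.
rewrite /opsum exchange_big; apply: eq_bigr => f _ /=.
by rewrite big_distrr big_distrl.
Qed.

(** * Summing over syndromes *)

Definition cst n (g : A) : {ffun 'I_n.+1 -> A * A} := [ffun => (g, g)].
Definition diagonal n (f : {ffun 'I_n.+1 -> A * A}) : bool := [forall j, (f j).1 == (f j).2].
Definition fixes_constant_chains n (Q : protocol n) : Prop :=
  forall s g, transfer Q s (cst n g) = 1.

Lemma linked_cst n g : linked (cst n g).
Proof. by apply/forallP => i; rewrite !ffunE. Qed.

Lemma diagonal_cst n g : diagonal (cst n g).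
Proof. by apply/forallP => j; rewrite !ffunE. Qed.

Lemma prod_indicator_diagonal n (c : 'I_n.+1 -> A * A -> algC) (f : {ffun 'I_n.+1 -> A * A}) :
  \prod_j (((f j).1 == (f j).2)%:R * c j (f j)) = (diagonal f)%:R * \prod_j c j (f j).
Proof. by rewrite big_split prod_indicator. Qed.

Lemma transfer_cst n (Q : protocol n) s g : transfer Q s (cst n g) =
  \prod_i psign (s i) g * (psign (Q s ord0) g * \prod_j psign (Q s (lift ord0 j)) g).
Proof.
rewrite /transfer linked_cst mul1r ffunE.
by congr (_ * (_ * _)); apply: eq_bigr => i _; rewrite ffunE.
Qed.

Lemma transfer_cst0 n (Q : protocol n) s : transfer Q s (cst n (false, false)) = 1.
Proof. by rewrite transfer_cst psign0r !big1 ?mulr1 // => i _; apply: psign0r. Qed.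

Lemma transfer_unlinked n (Q : protocol n) s f : ~~ linked f -> transfer Q s f = 0.
Proof. by move/negbTE=> unlinked; rewrite /transfer unlinked !mul0r. Qed.

Lemma transfer_linked n (Q : protocol n) s (f : {ffun 'I_n.+1 -> A * A}) g :
  linked f -> ends f = (g, g) ->
  transfer Q s f = transfer Q s (cst n g) *
    \prod_i (psign (Q s (node_of_rep i)) (xorA g (f (link_right i)).1) *
             psign (s i) (xorA g (f (link_right i)).1)).
Proof.
move=> hlink [f0 fN]; set d := fun i => xorA g (f (link_right i)).1.
have rightE i : (f (link_right i)).1 = xorA g (d i) by rewrite /d xorAK.
have leftE i : (f (link_left i)).2 = xorA g (d i) by rewrite -rightE; apply/eqP/(forallP hlink).
have syndE : \prod_i psign (s i) (f (link_right i)).1 =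
    \prod_i psign (s i) (cst n g (link_right i)).1 * \prod_i psign (s i) (d i).
  by rewrite -big_split; apply: eq_bigr => i _; rewrite rightE psign_xorr ffunE.
have corrE : \prod_j psign (Q s (lift ord0 j)) (f j).2 =
    \prod_j psign (Q s (lift ord0 j)) (cst n g j).2 * \prod_i psign (Q s (node_of_rep i)) (d i).
  rewrite !big_ord_recr /= !ffunE fN mulrAC -big_split; congr (_ * _).
  by apply: eq_bigr => i _; rewrite leftE psign_xorr ffunE.
by rewrite /transfer hlink linked_cst syndE corrE !ffunE f0 big_split /=; ring.
Qed.

Lemma linked_diagonal_cst n (f : {ffun 'I_n.+1 -> A * A}) :
  linked f -> diagonal f -> f = cst n (f ord0).1.
Proof.
move=> /forallP hlink /forallP hdiag.
have fst_const k (j : 'I_n.+1) : val j = k -> (f j).1 = (f ord0).1.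
  elim: k j => [|k IH] j jk; first by congr (f _).1; apply: val_inj.
  have kn : (k < n)%N by rewrite -ltnS -jk ltn_ord.
  have -> : j = link_right (Ordinal kn) by apply: val_inj.
  by rewrite -(eqP (hlink _)) -(eqP (hdiag _)); apply: IH.
apply/ffunP => j; rewrite ffunE [f j]surjective_pairing -(eqP (hdiag j)).
by rewrite (fst_const _ j erefl).
Qed.

Lemma linked_ends_cst n (f : {ffun 'I_n.+1 -> A * A}) g :
  linked f -> ends f = (g, g) -> (forall i, (f (link_right i)).1 = g) -> f = cst n g.
Proof.
move=> /forallP hlink [f0 fN] right_g; apply/ffunP => j; rewrite ffunE [f j]surjective_pairing.
congr (_, _).
  by case: (unliftP ord0 j) => [i ->|->] //; apply: right_g.
case: (unliftP ord_max j) => [i ->|->] //.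
by rewrite -link_leftE (eqP (hlink i)).
Qed.

Lemma sum_transfer_diagonal n (Q : protocol n) (fixQ : fixes_constant_chains Q) f :
  (diagonal f)%:R * \sum_s transfer Q s f = (f == cst n (f ord0).1)%:R * #|synd n|%:R.
Proof.
set g := (f ord0).1; have [-> | not_cst] := eqVneq f (cst n g).
  by rewrite diagonal_cst; under eq_bigr do rewrite fixQ; rewrite sumr_const !mul1r.
rewrite mulr0n mul0r; have [diag | _] := boolP (diagonal f); last by rewrite mulr0n mul0r.
have unlinked : ~~ linked f by apply: contra not_cst => /linked_diagonal_cst ->.
by rewrite big1 ?mulr0 // => s _; rewrite transfer_unlinked.
Qed.

Section CausalOrder.

Variables (n : nat) (P : protocol n) (alpha : {perm 'I_n}).
Hypothesis causalP : forall (k : 'I_n) (s s' : synd n),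
  (forall j : 'I_n, (j < k)%N -> s (alpha j) = s' (alpha j)) ->
  P s (node_of_rep (alpha k)) = P s' (node_of_rep (alpha k)).

(* Flipping the syndrome of the last repeater, in measurement order, with [d != 0] changes the
   sign of its syndrome factor but, by causality, no correction at a node with [d != 0]. *)
Lemma sum_deviation_signs_eq0 (d : 'I_n -> A) i0 : d i0 != (false, false) ->
  \sum_(s : synd n) \prod_i (psign (P s (node_of_rep i)) (d i) * psign (s i) (d i)) = 0.
Proof.
move=> dev_i0.
have [m dev_m last_m] : exists2 m, d (alpha m) != (false, false) &
    forall k, d (alpha k) != (false, false) -> (k <= m)%N.
  have dev_i0' : d (alpha ((alpha^-1)%g i0)) != (false, false) by rewrite permKV.
  by case: (@arg_maxnP _ _ (fun k => d (alpha k) != (false, false)) val dev_i0') => m; exists m.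
have [w flip_m] := exists_symp dev_m.
pose tau (s : synd n) : synd n := [ffun i => if i == alpha m then xorA w (s i) else s i].
have fixed_nodes s i : d i != (false, false) -> P (tau s) (node_of_rep i) = P s (node_of_rep i).
  move=> dev_i; rewrite -(permKV alpha i); apply: causalP => j lt_j.
  rewrite ffunE; case: eqP => // /perm_inj eq_jm.
  have := last_m ((alpha^-1)%g i); rewrite permKV => /(_ dev_i).
  by rewrite -eq_jm leqNgt lt_j.
apply: (sum_sign_reversing_eq0 (tau := tau)).
  by move=> s; apply/ffunP => i; rewrite !ffunE; case: eqP => // _; rewrite xorAK.
move=> s; rewrite (bigD1 (alpha m)) // [in RHS](bigD1 (alpha m)) //=.
have others : \prod_(i | i != alpha m)
    (psign (P (tau s) (node_of_rep i)) (d i) * psign (tau s i) (d i)) =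
    \prod_(i | i != alpha m) (psign (P s (node_of_rep i)) (d i) * psign (s i) (d i)).
  apply: eq_bigr => i /negbTE i_m; rewrite ffunE i_m.
  by have [->|dev_i] := eqVneq (d i) (false, false); rewrite ?psign0r ?fixed_nodes.
by rewrite others ffunE eqxx fixed_nodes // psign_xorl /psign flip_m; ring.
Qed.

Lemma sum_transfer_ends (fixP : fixes_constant_chains P) f :
  ((ends f).1 == (ends f).2)%:R * \sum_s transfer P s f =
  (f == cst n (f ord0).1)%:R * #|synd n|%:R.
Proof.
set g := (f ord0).1; have [-> | not_cst] := eqVneq f (cst n g).
  by rewrite /ends !ffunE eqxx; under eq_bigr do rewrite fixP; rewrite sumr_const !mul1r.
rewrite mulr0n mul0r.
have [ends_eq | _] := eqVneq (ends f).1 (ends f).2; last by rewrite mulr0n mul0r.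
have [hlink | unlinked] := boolP (linked f); last first.
  by rewrite big1 ?mulr0 // => s _; rewrite transfer_unlinked.
have endsE : ends f = (g, g) by rewrite [ends f]surjective_pairing -ends_eq.
have [i0 dev_i0] : exists i0, xorA g (f (link_right i0)).1 != (false, false).
  apply/existsP; apply: contraNT not_cst; rewrite negb_exists => /forallP all0.
  apply/eqP/(linked_ends_cst hlink endsE) => i.
  by move: (all0 i); rewrite negbK xorA_eq0 => /eqP.
under eq_bigr do rewrite (transfer_linked _ _ hlink endsE) fixP mul1r.
by rewrite (sum_deviation_signs_eq0 (d := fun i => xorA g (f (link_right i)).1) dev_i0) mulr0.
Qed.

End CausalOrder.

(* The coefficients of E(g,g) on both sides of condition (B) show that [transfer P s (cst n g)]
   does not depend on [g]. *)
Lemma swap_and_correct_fixes_constant_chains n (P : protocol n) :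
  swap_and_correct P -> fixes_constant_chains P.
Proof.
move=> [_ condB] s.
have [_ M_bell] := condB s; set M := lam_s P s _ in M_bell.
have w_neq0 : 4%:R^-1 ^+ n.+1 != 0 :> algC by rewrite expf_neq0 // invr_eq0 pnatr_eq0.
have coef_transfer g : coef M (g, g) = 4%:R^-1 ^+ n.+1 * transfer P s (cst n g).
  rewrite /M bell00_expansion lam_s_pauli2_expansion coef_opsum_pauli2.
  under eq_bigr do rewrite (prod_indicator_diagonal (fun _ _ => 4%:R^-1)) prodr_const card_ord.
  rewrite (bigD1 (cst n g)) /=; last by rewrite /ends !ffunE.
  rewrite diagonal_cst big1 ?addr0 ?mul1r // => f /andP [ends_g not_cst].
  have [diag | _] := boolP (diagonal f); last by rewrite mulr0n !mul0r.
  have [hlink | /transfer_unlinked ->] := boolP (linked f); last by rewrite mulr0.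
  move: not_cst; rewrite {1}(linked_diagonal_cst hlink diag).
  by move: ends_g; rewrite /ends xpair_eqE => /andP [/eqP -> _]; rewrite eqxx.
have coef_bell g : coef M (g, g) = trop M / 4%:R.
  rewrite {1}M_bell coef_scale bell00_expansion.
  by rewrite (coef_opsum_pauli2 _ (fun tu => tu)) big_pred1_eq eqxx mul1r.
have transfer_eq g : transfer P s (cst n g) = transfer P s (cst n (false, false)).
  by apply: (mulfI w_neq0); rewrite -!coef_transfer !coef_bell.
by move=> g; rewrite transfer_eq transfer_cst0.
Qed.

Lemma seqP_repeater n (s : synd n) i : seqP s (lift ord0 (lift ord0 i)) = s i.
Proof. by rewrite /seqP /= valK. Qed.

Lemma seqP_fixes_constant_chains n : fixes_constant_chains (@seqP n).
Proof.
move=> s g; rewrite transfer_cst big_ord_recl psign0l mul1r.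
under [X in _ * (_ * X)]eq_bigr do rewrite seqP_repeater.
by rewrite mul1r -big_split big1 // => i _; exact: psignK.
Qed.

Theorem theorem1 (n : nat) (hN : (0 < n)%N) (rho : 'I_n.+1 -> op B2)
    (hrho : forall k, density (rho k)) (P : protocol n)
    (hP : swap_and_correct P) :
  twirl (lam P (prodop rho)) = lam P (prodop (fun k => twirl (rho k))) /\
  lam P (prodop (fun k => twirl (rho k))) = lam (@seqP n) (prodop (fun k => twirl (rho k))).
Proof.
have fixP := swap_and_correct_fixes_constant_chains hP.
have fixS := @seqP_fixes_constant_chains n.
have [[alpha causalP] _] := hP.
pose c j := coef (rho j).
have -> : rho = fun j => opsum (c j) pauli2.
  by apply: functional_extensionality => j; apply: pauli2_expansion.
rewrite (_ : (fun k => twirl _) = fun j => opsum (fun tu => (tu.1 == tu.2)%:R * c j tu) pauli2);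
  last by apply: functional_extensionality => j; apply: (twirl_opsum_pauli2 _ (fun tu => tu)).
rewrite !lam_pauli2_expansion twirl_opsum_pauli2.
split; apply: eq_opsum => f; rewrite prod_indicator_diagonal [RHS]mulrAC.
  by rewrite mulrCA (sum_transfer_ends causalP fixP) (sum_transfer_diagonal fixP) mulrC.
by rewrite [LHS]mulrAC (sum_transfer_diagonal fixP) (sum_transfer_diagonal fixS).
Qed.
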